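(* Let $d>1$ be a divisor of $n$ and let $A$ be the Dickson matrix of a $q$-polynomial $f\in\mathbb{F}_{q^n}[x]$ which is Loewy-reducible with respect to the partition $\{d\mathbb{Z}_n,\mathbb{Z}_n\setminus d\mathbb{Z}_n\}$, where $d\mathbb{Z}_n=\{0,d,\dots,n-d\}$. Then $f(x)=f'(x)+\lambda\sum_{i=1}^{d-1}b_i\,Tr_{q^n|q^d}(ax)^{q^i}$ for some $\lambda,a\in\mathbb{F}_{q^n}^*$, some $b_1,\dots,b_{d-1}\in\mathbb{F}_{q^d}$ not all zero, and some $\mathbb{F}_{q^d}$-linear map $f'$ of $\mathbb{F}_{q^n}$.
   Context: The Dickson matrix of $f(x)=\sum_{j=0}^{n-1}a_jx^{q^j}$ is the $n\times n$ matrix indexed by $\mathbb{Z}_n$ with $A[i|j]=a_{j-i}^{q^i}$. $A$ is Loewy-reducible with respect to a partition $\{\alpha,\beta\}$ of $\mathbb{Z}_n$ if $|\alpha|,|\beta|\ge2$ and $\mathrm{rank}\,A[\alpha|\beta]=\mathrm{rank}\,A[\beta|\alpha]=1$ ($A[\alpha|\beta]$: rows $\alpha$, columns $\beta$). $Tr_{q^n|q^d}(x)=x+x^{q^d}+\dots+x^{q^{n-d}}$. *)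

From HB Require Import structures.
From mathcomp Require Import all_boot all_order all_algebra all_field.
Set Implicit Arguments. Unset Strict Implicit. Unset Printing Implicit Defensive.
Import GRing.Theory.
Local Open Scope ring_scope.

(* q-polynomial f(x) = sum_{j<n} a_j x^{q^j}; coefficients a_0..a_{n-1}
   given by a : nat -> F (values beyond n-1 are irrelevant). *)
Definition qpoly_eval (F : fieldType) (q n : nat) (a : nat -> F) (x : F) : F :=
  \sum_(j < n) a j * x ^+ (q ^ j).

Definition dickson (F : fieldType) (q n : nat) (a : nat -> F) : 'M[F]_n :=
  \matrix_(i < n, j < n) (a ((j + n - i) %% n)%N) ^+ (q ^ i).

(* the submatrix A[alpha|beta]: rows in alpha, columns in beta (in increasing order) *)
Definition submx (F : fieldType) (n : nat) (A : 'M[F]_n) (al be : {set 'I_n}) :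
  'M[F]_(#|al|, #|be|) :=
  mxsub (fun k : 'I_#|al| => enum_val k) (fun l : 'I_#|be| => enum_val l) A.

Definition loewy_reducible (F : fieldType) (n : nat) (A : 'M[F]_n)
  (al : {set 'I_n}) : Prop :=
  (2 <= #|al|)%N /\ (2 <= #|~: al|)%N /\
  \rank (submx A al (~: al)) = 1%N /\ \rank (submx A (~: al) al) = 1%N.

Definition dZn (n d : nat) : {set 'I_n} := [set i : 'I_n | (d %| i)%N].

Definition trace_rel (F : fieldType) (q n d : nat) (x : F) : F :=
  \sum_(k < n %/ d) x ^+ (q ^ (d * k)).

Definition in_sub (F : fieldType) (q d : nat) (c : F) : Prop := c ^+ (q ^ d) = c.

Definition sublinear (F : fieldType) (q d : nat) (g : F -> F) : Prop :=
  (forall x y, g (x + y) = g x + g y) /\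
  (forall c x, in_sub q d c -> g (c * x) = c * g x).

(* The 2x2 minors of both off-diagonal blocks of the Dickson matrix vanish.
   For indices r, r' not divisible by d, the block with rows in dZ_n gives
   a_r^(q^d) a_(r'+d) = a_r'^(q^d) a_(r+d), and the other block gives
   a_(r+d) = kappa^(q^r) a_r for a single kappa.  Going once around Z_n shows
   that kappa has norm 1 down to F_(q^d), so kappa = z^(q^d) / z by Hilbert 90.
   Hence a_j = e_(j mod d) z^(q^j) whenever d does not divide j, the first
   relation puts all ratios e_i / e_i' in F_(q^d), and grouping these terms of
   f by residue mod d produces the traces Tr(z x)^(q^i); the terms with d | j
   form the F_(q^d)-linear part f'. *)

From Pilot Require Import Defs.
From HB Require Import structures.
From mathcomp Require Import all_boot all_order all_algebra all_field.
From mathcomp Require Import ring zify.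
Import GRing.Theory.
Local Open Scope ring_scope.
Set Implicit Arguments. Unset Strict Implicit.

Lemma mxrank1_factor (F : fieldType) m n (M : 'M[F]_(m, n)) :
  \rank M = 1%N ->
  exists (u : 'I_m -> F) (v : 'I_n -> F), forall i j, M i j = u i * v j.
Proof.
move=> r1.
exists (fun i => \sum_(k : 'I_m) col_ebase M i k * ((k < 1)%N%:R)).
exists (fun j => \sum_(l : 'I_n) ((l < 1)%N%:R) * row_ebase M l j).
move=> i j; rewrite -{1}(mulmx_ebase M) r1 mxE big_distrlr /=.
rewrite exchange_big /=; apply: eq_bigr => l _; rewrite mxE big_distrl /=.
apply: eq_bigr => k _; rewrite [pid_mx 1 _ _]mxE.
have -> : ((k == l :> nat) && (k < 1)%N) = ((k < 1)%N && (l < 1)%N).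
  by case: k l => [[|k] hk] [[|l] hl]; rewrite /= ?andbF.
by case: (k < 1)%N; case: (l < 1)%N; rewrite /= ?mul0r ?mulr0 ?mulr1 ?mul1r ?mul0r ?mulr0.
Qed.

Section Rank1Submatrix.

Variables (F : fieldType) (n : nat) (A : 'M[F]_n) (al be : {set 'I_n}).
Hypothesis rank1 : \rank (Defs.submx A al be) = 1%N.

Lemma submx_rank1_minor i i' j j' :
  i \in al -> i' \in al -> j \in be -> j' \in be ->
  A i j * A i' j' = A i j' * A i' j.
Proof.
have [u [v huv]] := mxrank1_factor rank1.
have E x y (hx : x \in al) (hy : y \in be) :
    A x y = u (enum_rank_in hx x) * v (enum_rank_in hy y).
  by rewrite -huv /Defs.submx mxE !enum_rankK_in.
move=> hi hi' hj hj'.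
by rewrite (E i j hi hj) (E i' j' hi' hj') (E i j' hi hj') (E i' j hi' hj); ring.
Qed.

Lemma submx_rank1_neq0 : exists i j, [/\ i \in al, j \in be & A i j != 0].
Proof.
have M0 : Defs.submx A al be != 0 by rewrite -mxrank_eq0 rank1.
have /existsP[k /existsP[l]] : [exists k, exists l, Defs.submx A al be k l != 0].
  apply: contraR M0 => /existsPn M0; apply/eqP/matrixP => k l.
  by have /existsPn/(_ l) := M0 k; rewrite negbK mxE [RHS]mxE => /eqP.
by rewrite mxE => hkl; exists (enum_val k), (enum_val l); split=> //; apply: enum_valP.
Qed.

End Rank1Submatrix.

Lemma expr_sum_additive (R : pzSemiRingType) (e : nat)
    (exprD : forall x y : R, (x + y) ^+ e = x ^+ e + y ^+ e) (e_gt0 : (0 < e)%N)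
    I (r : seq I) (G : I -> R) :
  (\sum_(i <- r) G i) ^+ e = \sum_(i <- r) G i ^+ e.
Proof.
elim: r => [|x r IH]; first by rewrite !big_nil expr0n eqn0Ngt e_gt0.
by rewrite !big_cons exprD IH.
Qed.

Lemma finField_exists_nonroot (F : finFieldType) (p : {poly F}) :
  p != 0 -> (size p <= #|F|)%N -> exists x, ~~ root p x.
Proof.
move=> p0 sz; apply/existsP; rewrite -negb_forall; apply/negP => /forallP roots.
have all_roots : all (root p) (enum F) by apply/allP => x _; apply: roots.
have := leq_trans (max_poly_roots p0 all_roots (enum_uniq _)) sz.
by rewrite -cardE ltnn.
Qed.

Lemma exprX_expnD (R : pzSemiRingType) (x : R) q u v :
  (x ^+ (q ^ u)) ^+ (q ^ v) = x ^+ (q ^ (u + v)).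
Proof. by rewrite -exprM -expnD. Qed.

Section FrobeniusPowers.

Variables (F : finFieldType) (q n : nat).
Hypothesis q_prime_power : exists p k : nat, [/\ prime p, (0 < k)%N & q = (p ^ k)%N].
Hypothesis card_F : #|F| = (q ^ n)%N.

Lemma prime_power_gt1 : (1 < q)%N.
Proof.
by case: q_prime_power => p [k [pp k0 ->]]; rewrite -(expn0 p) ltn_exp2l ?prime_gt1.
Qed.

Lemma frobenius_gt0 j : (0 < q ^ j)%N.
Proof. by rewrite expn_gt0 ltnW // prime_power_gt1. Qed.

Lemma frobeniusD j (x y : F) : (x + y) ^+ (q ^ j) = x ^+ (q ^ j) + y ^+ (q ^ j).
Proof.
case: q_prime_power => p [k [pp k0 qE]].
have pF : p \in [pchar F].
  by apply: (card_finPcharP (n := (k * n)%N)); rewrite // card_F qE expnM.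
apply: exprDn_pchar.
by rewrite (eq_pnat _ (pcharf_eq pF)) qE -expnM pnatX pnat_id.
Qed.

Lemma frobenius_sum j I (r : seq I) (G : I -> F) :
  (\sum_(i <- r) G i) ^+ (q ^ j) = \sum_(i <- r) G i ^+ (q ^ j).
Proof. by apply: expr_sum_additive; [apply: frobeniusD | apply: frobenius_gt0]. Qed.

Lemma frobenius_id (x : F) : x ^+ (q ^ n) = x.
Proof. by rewrite -card_F expf_card. Qed.

Lemma frobenius_mod (x : F) r : x ^+ (q ^ r) = x ^+ (q ^ (r %% n)).
Proof.
rewrite {1}(divn_eq r n) addnC.
elim: (r %/ n)%N => [|t IH]; first by rewrite mul0n addn0.
by rewrite mulSn addnCA -exprX_expnD frobenius_id.
Qed.

Lemma sublinear_qpoly_dvd d (b : nat -> F) :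
  sublinear q d (fun x => \sum_(j < n | (d %| j)%N) b j * x ^+ (q ^ j)).
Proof.
split=> [x y|y x hy].
  by rewrite -big_split; apply: eq_bigr => j _; rewrite frobeniusD mulrDr.
rewrite mulr_sumr; apply: eq_bigr => j /dvdnP[t ->].
have fix_y u : y ^+ (q ^ (u * d)) = y.
  by elim: u => [|u IH]; rewrite ?mul0n ?expr1 // mulSn -exprX_expnD hy IH.
by rewrite exprMn fix_y mulrCA.
Qed.

Section Hilbert90.

Variables (d m : nat) (nu : F).
Hypotheses (n_eq : n = (d * m)%N) (d_gt0 : (0 < d)%N) (m_gt0 : (0 < m)%N).
Hypothesis norm_nu : \prod_(t < m) nu ^+ (q ^ (d * t)) = 1.

Let P k := \prod_(s < k) nu ^+ (q ^ (d * s)).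

Let nu_neq0 : nu != 0.
Proof.
apply: contra_eq_neq norm_nu => ->; case: m m_gt0 => // m' _.
by rewrite big_ord_recl muln0 expn0 expr1 mul0r eq_sym oner_neq0.
Qed.

Let P_neq0 k : P k != 0.
Proof. by rewrite prodf_seq_neq0; apply/allP => s _; rewrite expf_neq0. Qed.

Let P_frob k : P k ^+ (q ^ d) = P k.+1 / nu.
Proof.
rewrite /P big_ord_recl muln0 expn0 expr1 -prodrXl [nu * _]mulrC mulrK ?unitfE //.
apply: eq_bigr => s _; rewrite exprX_expnD.
by rewrite /bump /= mulnS addnC.
Qed.

(* The Lagrange resolvent of theta for the twisted Frobenius x |-> x^(q^d) / nu. *)
Let resolvent (th : F) := \sum_(k < m) th ^+ (q ^ (d * k)) / P k.

Let resolvent_frob th : resolvent th ^+ (q ^ d) = nu * resolvent th.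
Proof.
have termS k : (th ^+ (q ^ (d * k)) / P k) ^+ (q ^ d)
    = nu * (th ^+ (q ^ (d * k.+1)) / P k.+1).
  rewrite expr_div_n P_frob exprX_expnD addnC -mulnS.
  by have := P_neq0 k.+1; move: (P k.+1) => Y Y0; field; rewrite Y0 nu_neq0.
rewrite /resolvent frobenius_sum mulr_sumr.
case: m m_gt0 n_eq norm_nu => // m' _ n_eq' norm_nu'.
rewrite big_ord_recr big_ord_recl addrC /=; congr (_ + _).
  by apply: eq_bigr => k _; rewrite termS.
by rewrite termS [P _]norm_nu' divr1 -n_eq' frobenius_id /P big_ord0 muln0 expn0 expr1 divr1.
Qed.

Let resolvent_poly : {poly F} := \sum_(k < m) (P k)^-1 *: 'X^(q ^ (d * k)).

Let resolvent_polyE th : resolvent_poly.[th] = resolvent th.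
Proof.
rewrite /resolvent_poly horner_sum; apply: eq_bigr => k _.
by rewrite hornerZ hornerXn mulrC.
Qed.

Let resolvent_poly_neq0 : resolvent_poly != 0.
Proof.
apply/eqP => /(congr1 (fun p : {poly F} => p`_1)) /eqP; apply/negP.
rewrite coef0 /resolvent_poly coef_sum; case: m m_gt0 => // m' _.
rewrite big_ord_recl big1 ?addr0.
  by rewrite coefZ coefXn muln0 expn0 eqxx mulr1 /P big_ord0 invr1 oner_neq0.
move=> k _; rewrite coefZ coefXn; case: eqP; last by rewrite mulr0.
move/esym/eqP; rewrite -[X in _ == X](expn0 q) eqn_exp2l ?prime_power_gt1 //.
by rewrite muln_eq0 (negbTE (lt0n_neq0 d_gt0)).
Qed.

Let size_resolvent_poly : (size resolvent_poly <= #|F|)%N.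
Proof.
have q1 := prime_power_gt1.
rewrite card_F (leq_trans (size_sum _ _ _)) //; apply/bigmax_leqP => k _.
rewrite (leq_trans (size_scale_leq _ _)) // size_polyXn n_eq ltn_exp2l //.
by rewrite ltn_pmul2l.
Qed.

Lemma hilbert90 : exists z : F, z != 0 /\ z ^+ (q ^ d) = nu * z.
Proof.
have [th] := finField_exists_nonroot resolvent_poly_neq0 size_resolvent_poly.
by rewrite /root resolvent_polyE => ?; exists (resolvent th); rewrite resolvent_frob.
Qed.

End Hilbert90.

End FrobeniusPowers.

Definition qpoly_trace_form (F : fieldType) (q n d : nat) (a : nat -> F) : Prop :=
  exists (lam c : F), lam != 0 /\ c != 0 /\
  exists b : nat -> F,
    (forall i, (1 <= i < d)%N -> in_sub q d (b i)) /\
    (exists i, (1 <= i < d)%N /\ b i != 0) /\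
    exists f' : F -> F, sublinear q d f' /\
      forall x : F, qpoly_eval q n a x =
        f' x + lam * \sum_(1 <= i < d) b i * (trace_rel q n d (c * x)) ^+ (q ^ i).

Section LoewyReducibleDickson.

Variables (F : finFieldType) (q n d : nat) (a : nat -> F).
Hypothesis q_prime_power : exists p k : nat, [/\ prime p, (0 < k)%N & q = (p ^ k)%N].
Hypothesis card_F : #|F| = (q ^ n)%N.
Hypotheses (d_gt1 : (1 < d)%N) (d_dvd_n : (d %| n)%N) (n_gt0 : (0 < n)%N).

Let A := dickson q n a.
Let al := dZn n d.
Hypothesis rank_al_be : \rank (Defs.submx A al (~: al)) = 1%N.
Hypothesis rank_be_al : \rank (Defs.submx A (~: al) al) = 1%N.

Let frob_id := frobenius_id card_F.
Let frob_gt0 := frobenius_gt0 q_prime_power.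
Let frob_sum := frobenius_sum q_prime_power card_F.
Let d_gt0 : (0 < d)%N := ltnW d_gt1.
Let d_le_n : (d <= n)%N := dvdn_leq n_gt0 d_dvd_n.
Let m := (n %/ d)%N.
Let n_eq : n = (d * m)%N. Proof. by rewrite mulnC divnK. Qed.
Let m_gt0 : (0 < m)%N.
Proof. by rewrite lt0n; apply: contra_eq_neq n_eq => ->; rewrite muln0 -lt0n. Qed.

Let c r := a (r %% n).

Let c_mod u v : (u = v %[mod n])%N -> c u = c v.
Proof. by rewrite /c => ->. Qed.

Let dickson_coef (i j : 'I_n) : A i j = c (j + n - i) ^+ (q ^ i).
Proof. by rewrite /A /dickson mxE. Qed.

Let in_al (i : 'I_n) : (i \in al) = (d %| i)%N.
Proof. by rewrite inE. Qed.

Let in_be (i : 'I_n) : (i \in ~: al) = ~~ (d %| i)%N.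
Proof. by rewrite in_setC in_al. Qed.

Let ndvd i : (0 < i < d)%N -> ~~ (d %| i)%N.
Proof. by case/andP=> i_gt0 i_lt_d; rewrite gtnNdvd. Qed.

Let dvdn_modn r : (d %| r %% n)%N = (d %| r)%N.
Proof. by rewrite /dvdn modn_dvdm. Qed.

Lemma coef_shift_cross r r' : ~~ (d %| r)%N -> ~~ (d %| r')%N ->
  c r ^+ (q ^ d) * c (r' + d) = c r' ^+ (q ^ d) * c (r + d).
Proof.
move=> hr hr'; have row_nd : (n - d < n)%N by lia.
have := submx_rank1_minor rank_al_be (i := Ordinal n_gt0) (i' := Ordinal row_nd)
   (j := Ordinal (ltn_pmod r n_gt0)) (j' := Ordinal (ltn_pmod r' n_gt0)).
rewrite !in_al !in_be /= dvdn0 dvdn_sub // !dvdn_modn hr hr' => /(_ isT isT isT isT).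
rewrite !dickson_coef /= expn0 !expr1.
have c0 u : c (u %% n + n - 0) = c u by apply: c_mod; rewrite subn0 modnDr modn_mod.
have cd u : c (u %% n + n - (n - d)) = c (u + d).
  by apply: c_mod; rewrite (_ : _ + n - (n - d) = u %% n + d)%N ?modnDml //; lia.
rewrite !c0 !cd => /(congr1 (fun t => t ^+ (q ^ d))).
by rewrite !exprMn !exprX_expnD subnK // !frob_id.
Qed.

Lemma exists_offdiag_coef :
  exists r0, [/\ (r0 < n)%N, ~~ (d %| r0)%N & c r0 != 0].
Proof.
have [i0 [j0 [hi0 hj0 hA0]]] := submx_rank1_neq0 rank_al_be.
exists ((j0 + n - i0) %% n)%N; split; first exact: ltn_pmod.
  rewrite dvdn_modn -addnBA ?(ltnW (ltn_ord i0)) // dvdn_addl -?in_be //.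
  by apply: dvdn_sub => //; rewrite -in_al.
rewrite (c_mod (v := (j0 + n - i0)%N)) ?modn_mod //.
by move: hA0; rewrite dickson_coef expf_eq0 frob_gt0.
Qed.

Section Offset.

Variable r0 : nat.
Hypotheses (r0_lt_n : (r0 < n)%N) (r0_ndvd : ~~ (d %| r0)%N) (c_r0_neq0 : c r0 != 0).

(* kappa = (c (r0 + d) / c r0) ^ (q ^ -r0), so that c (r0 + d) = kappa ^ (q ^ r0) * c r0. *)
Let kappa := (c (r0 + d) / c r0) ^+ (q ^ (n - r0)).

Lemma coef_shift r : ~~ (d %| r)%N -> c (r + d) = kappa ^+ (q ^ r) * c r.
Proof.
move=> hr; set s := (r %% n)%N.
have s_gt0 : (0 < s)%N by rewrite lt0n; apply: contra hr => /eqP s0; rewrite -dvdn_modn -/s s0.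
have s_lt_n : (s < n)%N := ltn_pmod _ n_gt0.
have row_s : (n - s < n)%N by lia.
have r0_gt0 : (0 < r0)%N by rewrite lt0n; apply: contra r0_ndvd => /eqP ->.
have row_r0 : (n - r0 < n)%N by lia.
have := submx_rank1_minor rank_be_al (i := Ordinal row_s) (i' := Ordinal row_r0)
   (j := Ordinal n_gt0) (j' := Ordinal (ltn_pmod d n_gt0)).
rewrite !in_al !in_be /= dvdn0 dvdn_modn dvdnn.
rewrite !dvdn_subr ?(ltnW s_lt_n) ?(ltnW r0_lt_n) // dvdn_modn hr r0_ndvd.
move=> /(_ isT isT isT isT); rewrite !dickson_coef /=.
have c0 v : (v < n)%N -> c (0 + n - (n - v)) = c v.
  by move=> hv; rewrite (_ : 0 + n - (n - v) = v)%N //; lia.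
have cd v : (v < n)%N -> c (d %% n + n - (n - v)) = c (v + d).
  move=> hv; apply: c_mod; rewrite (_ : d %% n + n - (n - v) = v + d %% n)%N; last by lia.
  by rewrite modnDmr.
have cs : c s = c r by apply: c_mod; rewrite modn_mod.
have csd : c (s + d) = c (r + d) by apply: c_mod; rewrite modnDml.
rewrite !c0 // !cd // cs csd => /(congr1 (fun t => t ^+ (q ^ s))).
rewrite !exprMn !exprX_expnD !subnK ?(ltnW s_lt_n) // !frob_id => E.
have frob_s (x : F) : x ^+ (q ^ (n - r0 + s)) = x ^+ (q ^ (n - r0 + r)).
  by rewrite (frobenius_mod card_F) [RHS](frobenius_mod card_F) modnDmr.
rewrite !frob_s in E; rewrite expr_div_n.
have Y0 : c r0 ^+ (q ^ (n - r0 + r)) != 0 by rewrite expf_neq0.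
move: Y0 E; move: (c r0 ^+ _) (c (r0 + d) ^+ _) => Y X Y0 E.
by apply: (mulIf Y0); rewrite -E [RHS]mulrAC divfK // mulrC.
Qed.

Lemma coef_shift_iter t :
  c (r0 + d * t) = (\prod_(s < t) kappa ^+ (q ^ (r0 + d * s))) * c r0.
Proof.
elim: t => [|t IH]; first by rewrite muln0 addn0 big_ord0 mul1r.
rewrite big_ord_recr /= mulnS (addnC d) addnA coef_shift; last first.
  by rewrite dvdn_addl ?dvdn_mulr.
by rewrite IH mulrA [_ * kappa ^+ _]mulrC.
Qed.

Lemma norm_kappa : \prod_(t < m) kappa ^+ (q ^ (d * t)) = 1.
Proof.
have norm_r0 : \prod_(s < m) kappa ^+ (q ^ (r0 + d * s)) = 1.
  apply: (mulIf c_r0_neq0); rewrite mul1r -coef_shift_iter -n_eq.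
  by apply: c_mod; rewrite modnDr.
have : (\prod_(t < m) kappa ^+ (q ^ (d * t))) ^+ (q ^ r0) = 1.
  by rewrite -prodrXl -[RHS]norm_r0; apply: eq_bigr => s _; rewrite exprX_expnD addnC.
move/(congr1 (fun x => x ^+ (q ^ (n - r0)))).
by rewrite exprX_expnD subnKC ?(ltnW r0_lt_n) // frob_id expr1n.
Qed.

Section Twist.

Variable z : F.
Hypotheses (z_neq0 : z != 0) (z_frob : z ^+ (q ^ d) = kappa * z).

Let z_exp_neq0 u : z ^+ u != 0. Proof. by rewrite expf_neq0. Qed.

Lemma coef_twist r t : ~~ (d %| r)%N ->
  c (r + d * t) = c r / z ^+ (q ^ r) * z ^+ (q ^ (r + d * t)).
Proof.
move=> hr; elim: t => [|t IH]; first by rewrite muln0 addn0 divfK.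
rewrite mulnS (addnC d) addnA coef_shift; last by rewrite dvdn_addl ?dvdn_mulr.
by rewrite IH [(r + d * t + d)%N]addnC -(exprX_expnD z q d) z_frob exprMn; ring.
Qed.

Let e i := c i / z ^+ (q ^ i).

Lemma coef_nondvdE j : (j < n)%N -> ~~ (d %| j)%N -> a j = e (j %% d) * z ^+ (q ^ j).
Proof.
move=> jn hj; have hjd : ~~ (d %| j %% d)%N by rewrite /dvdn modn_mod.
have := coef_twist (j %/ d) hjd; rewrite mulnC addnC -divn_eq.
by rewrite /c modn_small.
Qed.

Lemma twist_frob i : ~~ (d %| i)%N ->
  e i ^+ (q ^ d) * c (r0 + d) = c r0 ^+ (q ^ d) * e i.
Proof.
move=> hi; have := coef_shift_cross hi r0_ndvd.
have := coef_twist 1 hi; rewrite muln1 => ->.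
rewrite -{1}(divfK (z_exp_neq0 (q ^ i)) (c i)) exprMn exprX_expnD => E.
by apply: (mulIf (z_exp_neq0 (q ^ (i + d)))); rewrite mulrAC E /e; ring.
Qed.

Let i1 := (r0 %% d)%N.

Let i1_ndvd : ~~ (d %| i1)%N. Proof. by rewrite /dvdn modn_mod. Qed.

Lemma twist_r0_neq0 : e i1 != 0.
Proof.
apply: contra c_r0_neq0 => /eqP e0; apply/eqP.
by rewrite /c modn_small // (coef_nondvdE r0_lt_n r0_ndvd) -/i1 e0 mul0r.
Qed.

(* Both e i and e i1 satisfy x ^ (q ^ d) = (c r0 ^ (q ^ d) / c (r0 + d)) * x. *)
Lemma twist_ratio_fixed i : ~~ (d %| i)%N -> (e i / e i1) ^+ (q ^ d) = e i / e i1.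
Proof.
move=> hi; have T0 : c r0 ^+ (q ^ d) != 0 by rewrite expf_neq0.
have U0 : c (r0 + d) != 0.
  apply: contra_eq_neq (twist_frob i1_ndvd) => ->.
  by rewrite mulr0 eq_sym mulf_neq0 ?twist_r0_neq0.
have eE j : ~~ (d %| j)%N -> e j ^+ (q ^ d) = c r0 ^+ (q ^ d) * e j / c (r0 + d).
  by move=> hj; rewrite -twist_frob // mulfK.
rewrite expr_div_n !eE //; move: T0 U0 twist_r0_neq0.
move: (c r0 ^+ _) (c (r0 + d)) (e i1) (e i) => T U E X T0 U0 E0.
by field; rewrite T0 U0 E0.
Qed.

Lemma qpoly_nondvd_partE x :
  \sum_(j < n | ~~ (d %| j)%N) a j * x ^+ (q ^ j) =
  \sum_(1 <= i < d) e i * trace_rel q n d (z * x) ^+ (q ^ i).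
Proof.
pose G j := if (d %| j)%N then 0 else e (j %% d) * (z * x) ^+ (q ^ j).
transitivity (\sum_(j < n) G j).
  rewrite big_mkcond /=; apply: eq_bigr => j _; rewrite /G.
  by case: (boolP (d %| j)%N) => hj //=; rewrite (coef_nondvdE (ltn_ord j) hj) exprMn mulrA.
rewrite -(big_mkord xpredT G) [in LHS]n_eq mulnC big_nat_mul.
under eq_bigr => k _.
  rewrite mulSn [(d + _)%N]addnC -{1}(add0n (k * d)%N) big_addn addKn.
  over.
rewrite exchange_big_nat /=.
rewrite big_ltn // big1 ?add0r => [|k _]; last by rewrite /G add0n dvdn_mull.
apply: eq_big_nat => i hi.
rewrite /trace_rel -/m frob_sum mulr_sumr big_mkord.
apply: eq_bigr => k _; rewrite /G dvdn_addl ?dvdn_mull // (negbTE (ndvd hi)).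
rewrite exprX_expnD addnC modnMDl modn_small; last by case/andP: hi.
by rewrite mulnC.
Qed.

Lemma twisted_trace_form : qpoly_trace_form q n d a.
Proof.
exists (e i1), z; split; first exact: twist_r0_neq0.
split=> //; exists (fun i => e i / e i1); split.
  by move=> i /ndvd; apply: twist_ratio_fixed.
split.
  exists i1; rewrite divff ?twist_r0_neq0 ?oner_neq0 // ltn_pmod // andbT lt0n.
  by split=> //; apply: contra i1_ndvd => /eqP ->.
exists (fun x => \sum_(j < n | (d %| j)%N) a j * x ^+ (q ^ j)).
split; first exact: (sublinear_qpoly_dvd q_prime_power card_F).
move=> x; rewrite /qpoly_eval (bigID (fun j : 'I_n => (d %| j)%N)) /=.
rewrite qpoly_nondvd_partE mulr_sumr; congr (_ + _); apply: eq_bigr => i _.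
by rewrite mulrA [e i1 * _]mulrC divfK ?twist_r0_neq0.
Qed.

End Twist.

End Offset.

Lemma dickson_loewy_trace_form : qpoly_trace_form q n d a.
Proof.
have [r0 [r0_lt_n r0_ndvd c_r0_neq0]] := exists_offdiag_coef.
have [z [z_neq0 z_frob]] :=
  hilbert90 q_prime_power card_F n_eq d_gt0 m_gt0 (norm_kappa r0_lt_n r0_ndvd c_r0_neq0).
exact: twisted_trace_form z_neq0 z_frob.
Qed.

End LoewyReducibleDickson.

Unset Implicit Arguments. Set Strict Implicit.

Theorem mainTheorem13 (F : finFieldType) (q n d : nat)
  (hq : exists p k : nat, [/\ prime p, (0 < k)%N & q = (p ^ k)%N])
  (hF : #|F| = (q ^ n)%N)
  (hd1 : (1 < d)%N) (hdn : (d %| n)%N)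
  (a : nat -> F)
  (hL : loewy_reducible (dickson q n a) (dZn n d)) :
  exists (lam c : F), lam != 0 /\ c != 0 /\
  exists b : nat -> F,
    (forall i, (1 <= i < d)%N -> in_sub q d (b i)) /\
    (exists i, (1 <= i < d)%N /\ b i != 0) /\
    exists f' : F -> F, sublinear q d f' /\
      forall x : F, qpoly_eval q n a x =
        f' x + lam * \sum_(1 <= i < d) b i * (trace_rel q n d (c * x)) ^+ (q ^ i).
Proof.
case: hL => card_al [_ [rank_al_be rank_be_al]].
have n_gt0 : (0 < n)%N.
  by rewrite -[n]card_ord (leq_trans _ (max_card (mem (dZn n d)))) // (leq_trans _ card_al).
exact: dickson_loewy_trace_form hq hF hd1 hdn n_gt0 rank_al_be rank_be_al.
Qed.
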